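(* (i) For every positive integer $k$, the sets $\{0,1,\dots,k-1\}$ and $k+\{0,k,2k,\dots,(k-1)k\}=\{k,2k,\dots,k^2\}$, viewed in $\mathbb{Z}_{k^2+1}$, form a (classical) $(k^2+1,2,k,1)$-SEDF in $\mathbb{Z}_{k^2+1}$. (ii) Let $v,k$ be positive integers with $k\mid v$, $v\mid k^2$ and $\lambda=k^2/v>1$, and in $\mathbb{Z}_{v+1}$ let $A_{X'}=\{0,1,\dots,k-1\}$ and $A_{Y'}=\{ak,ak+1,\dots,ak+\lambda-1: a=0,\dots,\tfrac{v}{k}-1\}$. Then there are no $s,t\in\mathbb{Z}_{v+1}$ and no $\mu$ such that $\{s+A_{X'}, t+A_{Y'}\}$ is a classical $(v+1,2,k,\mu)$-SEDF in $\mathbb{Z}_{v+1}$.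
   Context: For subsets $A,B$ of an additive group $G$, $\Delta(A,B)$ is the multiset $\{a-b:a\in A,b\in B\}$, and $s+A=\{s+a: a\in A\}$. For a group $G$ of order $v$ and $m>1$, a family of pairwise disjoint $k$-subsets $\{A_1,\dots,A_m\}$ of $G$ is a classical $(v,m,k,\lambda)$-SEDF if for each $i$ the multiset union $\bigcup_{j\neq i}\Delta(A_i,A_j)$ contains each non-identity element of $G$ exactly $\lambda$ times and does not contain $0$. (The sets $\{0,\dots,k-1\}$ and $\{0,k,\dots,(k-1)k\}$ form a non-disjoint $(k^2,2,k,1)$-SEDF in $\mathbb{Z}_{k^2}$; part (i) says a translation converts them into a classical SEDF in $\mathbb{Z}_{k^2+1}$, and part (ii) that no such conversion is possible when $\lambda>1$.) *)

From mathcomp Require Import all_boot all_order all_algebra.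
Set Implicit Arguments. Unset Strict Implicit. Unset Printing Implicit Defensive.
Import GRing.Theory.
Local Open Scope ring_scope.

Definition trans (G : finZmodType) (s : G) (A : {set G}) : {set G} :=
  [set s + a | a in A].

(* number of occurrences of g in the multiset Delta(A,B) = {a - b : a in A, b in B} *)
Definition delta_mult (G : finZmodType) (A B : {set G}) (g : G) : nat :=
  #|[set ab in setX A B | ab.1 - ab.2 == g]|.

Definition SEDF (G : finZmodType) (v m k lam : nat) (A : 'I_m -> {set G}) : Prop :=
  [/\ #|G| = v, (1 < m)%N,
      (forall i, #|A i| = k),
      (forall i j, i != j -> [disjoint A i & A j]) &
      (forall i (g : G),
          (\sum_(j < m | j != i) delta_mult (A i) (A j) g)%N
            = (if g == 0%R then 0%N else lam))].

Arguments SEDF {G} v m k lam A.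

Definition pair2 (G : finZmodType) (X Y : {set G}) : 'I_2 -> {set G} :=
  fun i => if val i == 0%N then X else Y.

From mathcomp Require Import all_boot all_order all_algebra.
From mathcomp Require Import zify ring.
Set Implicit Arguments.
Unset Strict Implicit.
Unset Printing Implicit Defensive.
Import GRing.Theory.
Local Open Scope ring_scope.

(** In (i) the differences i - (k + jk), 0 <= i, j < k, are k^2 distinct
    integers in [-k^2, -1], so each nonzero residue mod k^2 + 1 occurs exactly
    once among them.  In (ii), with n = v/k and l = k^2/v, the integers
    i - (ak + c) fill an interval of length nk + l - 1 = v + l - 1 >= v + 1,
    so t - s is always such a difference mod v + 1 and the two translates
    intersect: they are not even disjoint. *)

Lemma Zp_nat_inj (p a b : nat) : (1 < p)%N -> (a < p)%N -> (b < p)%N ->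
  (a%:R : 'Z_p) = b%:R -> a = b.
Proof. by move=> p_gt1 a_lt b_lt /(congr1 val); rewrite /= !val_Zp_nat // !modn_small. Qed.

Lemma Zp_natE (p : nat) (x : 'Z_p) : (1 < p)%N -> exists2 u, (u < p)%N & x = u%:R.
Proof.
move=> p_gt1; have x_lt : (val x < p)%N.
  by have := ltn_ord x; rewrite [X in (_ < X)%N -> _]Zp_cast.
by exists (val x); last by apply: val_inj; rewrite /= val_Zp_nat // modn_small.
Qed.

Lemma card_Zp_nat_imset (p : nat) (I : finType) (f : I -> nat) :
  (1 < p)%N -> injective f -> (forall x, f x < p)%N ->
  #|[set ((f x)%:R : 'Z_p) | x : I]| = #|I|.
Proof.
move=> p_gt1 f_inj f_lt; rewrite card_imset // => x y.
by move/(Zp_nat_inj p_gt1 (f_lt x) (f_lt y))/f_inj.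
Qed.

Section DeltaMult.

Variable G : finZmodType.
Implicit Types (A B : {set G}) (g : G).

Lemma delta_multC A B g : delta_mult B A g = delta_mult A B (- g).
Proof.
have swapK : involutive (fun ab : G * G => (ab.2, ab.1)) by case.
rewrite /delta_mult -(card_imset _ (inv_inj swapK)) (can2_imset_pre _ swapK swapK).
apply: eq_card => -[x y]; rewrite !inE /= [(y \in B) && _]andbC.
by rewrite -eqr_oppLR opprB.
Qed.

Lemma delta_mult0 A B : delta_mult A B 0 = #|A :&: B|.
Proof.
have diag_inj : injective (fun x : G => (x, x)) by move=> x y [].
rewrite /delta_mult -(card_imset _ diag_inj); apply: eq_card => -[a b].
rewrite !inE /= subr_eq0.
apply/idP/imsetP => [/andP[/andP[aA bB] /eqP ab] | [x]].
  by subst b; exists a; rewrite // inE aA.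
by rewrite inE => /andP[xA xB] [-> ->]; rewrite xA xB eqxx.
Qed.

Lemma delta_mult_imset (I J : finType) (f : I -> G) (h : J -> G) g :
  injective f -> injective h ->
  delta_mult [set f x | x : I] [set h y | y : J] g
  = #|[set x : I * J | f x.1 - h x.2 == g]|.
Proof.
move=> f_inj h_inj.
have fh_inj : injective (fun x : I * J => (f x.1, h x.2)).
  by move=> [x1 x2] [y1 y2] [/f_inj-> /h_inj->].
rewrite /delta_mult -(card_imset _ fh_inj); apply: eq_card => -[a b].
rewrite !inE /=; apply/idP/imsetP.
  move=> /andP[/andP[/imsetP[x _ ->] /imsetP[y _ ->]] e].
  by exists (x, y); rewrite ?inE.
by move=> [[x y]]; rewrite inE /= => e [-> ->]; rewrite e !imset_f.
Qed.

End DeltaMult.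

Lemma card_fiber_inj (I T : finType) (d : I -> T) (z : T) :
  injective d -> (forall x, d x != z) -> #|I| = #|T|.-1 ->
  forall t, #|[set x | d x == t]| = (t != z).
Proof.
move=> d_inj d_neq cardI t.
have [-> | t_neq] := eqVneq t z.
  by apply/eqP; rewrite cards_eq0; apply/eqP/setP => x; rewrite !inE (negbTE (d_neq x)).
have im_d : [set d x | x : I] = [set~ z].
  apply/eqP; rewrite eqEcard cardsC1 card_imset // -cardI leqnn andbT.
  by apply/subsetP => _ /imsetP[x _ ->]; rewrite !inE d_neq.
have /imsetP[x _ ->] : t \in [set d x | x : I] by rewrite im_d !inE t_neq.
rewrite (_ : [set y | _] = [set x]) ?cards1 //.
by apply/setP => y; rewrite !inE (inj_eq d_inj).
Qed.

Lemma SEDF_pair2 (G : finZmodType) (v k lam : nat) (X Y : {set G}) :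
  #|G| = v -> #|X| = k -> #|Y| = k ->
  (forall g, delta_mult X Y g = if g == 0 then 0%N else lam) ->
  SEDF v 2 k lam (pair2 X Y).
Proof.
move=> cardG cardX cardY deltaXY.
have disjXY : [disjoint X & Y].
  by rewrite -setI_eq0 -cards_eq0 -delta_mult0 deltaXY eqxx.
split=> //.
- by case=> -[|[|//]].
- by case=> -[|[|//]] ? [[|[|//]] ?] //= _; rewrite disjoint_sym.
move=> i g; rewrite big_mkcond /= !big_ord_recl big_ord0 /=.
case: i => -[|[|//]] ? /=; rewrite /pair2 /=.
  by rewrite add0n addn0.
by rewrite !addn0 delta_multC deltaXY oppr_eq0.
Qed.

Lemma addn_mul_inj (k i i' j j' : nat) : (i < k)%N -> (i' < k)%N ->
  (i + j * k = i' + j' * k)%N -> i = i' /\ j = j'.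
Proof.
move=> i_lt i'_lt e; have k_gt0 : (0 < k)%N by apply: leq_ltn_trans i_lt.
have := congr1 (modn^~ k) e; have := congr1 (divn^~ k) e.
rewrite /= ![(_ + _ * k)%N]addnC !modnMDl !divnMDl // !modn_small // !divn_small //.
by rewrite !addn0.
Qed.

Section ShiftedMultiples.

Variable k : nat.
Hypothesis k_gt0 : (0 < k)%N.

Local Notation Zk := 'Z_(k ^ 2 + 1).
Local Notation X := [set (i%:R : Zk) | i : 'I_k].
Local Notation Y := [set ((k + j * k)%N%:R : Zk) | j : 'I_k].

Let modulus_gt1 : (1 < k ^ 2 + 1)%N. Proof. by rewrite addn1 ltnS expn_gt0 k_gt0. Qed.

Let ord_lt_modulus (i : 'I_k) : (i < k ^ 2 + 1)%N.
Proof. by have := ltn_ord i; nia. Qed.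

Let shifted_lt_modulus (j : 'I_k) : (k + j * k < k ^ 2 + 1)%N.
Proof. by have := ltn_ord j; nia. Qed.

Let diff (x : 'I_k * 'I_k) : Zk := (x.1 : nat)%:R - (k + x.2 * k)%N%:R.

Let diff_inj : injective diff.
Proof.
move=> [i j] [i' j'] e.
have lt_modulus (a b : 'I_k) : (a + b * k < k ^ 2 + 1)%N.
  by have := ltn_ord a; have := ltn_ord b; nia.
have : (i + j' * k)%N%:R = (i' + j * k)%N%:R :> Zk.
  apply/eqP; rewrite -subr_eq0; apply/eqP.
  transitivity (diff (i, j) - diff (i', j')); last by rewrite e subrr.
  by rewrite /diff /= !natrD; ring.
move/(Zp_nat_inj modulus_gt1 (lt_modulus i j') (lt_modulus i' j)).
by case/addn_mul_inj=> // /val_inj-> /val_inj->.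
Qed.

Let diff_neq0 x : diff x != 0.
Proof.
case: x => i j; rewrite /diff subr_eq0 /=; apply/eqP.
move/(Zp_nat_inj modulus_gt1 (ord_lt_modulus i) (shifted_lt_modulus j)).
by have := ltn_ord i; lia.
Qed.

Lemma delta_mult_shifted_multiples (g : Zk) :
  delta_mult X Y g = if g == 0 then 0%N else 1%N.
Proof.
rewrite delta_mult_imset; last 2 first.
- by move=> i i' /(Zp_nat_inj modulus_gt1 (ord_lt_modulus i) (ord_lt_modulus i'))/val_inj.
- move=> j j' /(Zp_nat_inj modulus_gt1 (shifted_lt_modulus j) (shifted_lt_modulus j')).
  by move/addnI/eqP; rewrite eqn_pmul2r // => /eqP/val_inj.
rewrite (card_fiber_inj diff_inj diff_neq0).
  by case: eqP.
by rewrite card_prod !card_ord Zp_cast // addn1 /= mulnn.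
Qed.

Lemma SEDF_shifted_multiples :
  SEDF (k ^ 2 + 1) 2 k 1
    (pair2 X (trans (k%:R) [set ((j * k)%N%:R : Zk) | j : 'I_k])).
Proof.
have -> : trans (k%:R) [set ((j * k)%N%:R : Zk) | j : 'I_k] = Y.
  by rewrite /trans -imset_comp; apply: eq_imset => j; rewrite /= natrD.
apply: SEDF_pair2; last exact: delta_mult_shifted_multiples.
- by rewrite card_ord Zp_cast.
- by rewrite card_Zp_nat_imset ?card_ord //; apply: val_inj.
rewrite card_Zp_nat_imset ?card_ord // => j j' /addnI/eqP.
by rewrite eqn_pmul2r // => /eqP/val_inj.
Qed.

End ShiftedMultiples.

Lemma sumset_cover (n k l u : nat) : (0 < n)%N -> (0 < k)%N -> (0 < l)%N ->
  (u.+1 < n * k + l)%N ->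
  exists (a : 'I_n) (c : 'I_l) (i : 'I_k), u = (a * k + c + i)%N.
Proof.
move=> n_gt0 k_gt0 l_gt0 u_lt.
have nk : (n.-1 * k + k = n * k)%N by rewrite -mulSnr prednK.
have [u_lt_nk | u_ge_nk] := ltnP u (n * k).
  have a_lt : (u %/ k < n)%N by rewrite ltn_divLR.
  exists (Ordinal a_lt), (Ordinal l_gt0), (Ordinal (ltn_pmod u k_gt0)).
  by rewrite /= addn0 -divn_eq.
have a_lt : (n.-1 < n)%N by rewrite ltn_predL.
have c_lt : (u.+1 - n * k < l)%N by lia.
have i_lt : (k.-1 < k)%N by rewrite ltn_predL.
exists (Ordinal a_lt), (Ordinal c_lt), (Ordinal i_lt).
rewrite /=; lia.
Qed.

Lemma translates_not_disjoint (p n k l : nat) (s t : 'Z_p) :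
  (1 < p)%N -> (0 < n)%N -> (0 < k)%N -> (0 < l)%N -> (p < n * k + l)%N ->
  ~~ [disjoint trans s [set (i%:R : 'Z_p) | i : 'I_k]
       & trans t [set ((a * k + c)%N%:R : 'Z_p) | a : 'I_n, c : 'I_l]].
Proof.
move=> p_gt1 n_gt0 k_gt0 l_gt0 p_lt.
(* Reflecting a and c turns the sumset of [sumset_cover] into differences. *)
pose T := (n.-1 * k + l.-1)%N.
have [u u_lt def_u] := Zp_natE (t - s + T%:R) p_gt1.
have [a [c [i def_i]]] := sumset_cover n_gt0 k_gt0 l_gt0 (leq_ltn_trans u_lt p_lt).
pose b := ((rev_ord a) * k + rev_ord c)%N.
have bT : (b + u = T + i)%N.
  have : ((n - a.+1) * k + a * k = n.-1 * k)%N.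
    by rewrite -mulnDl; congr (_ * _); have := ltn_ord a; lia.
  by rewrite /b /T def_i /=; have := ltn_ord c; lia.
have meet : s + i%:R = t + b%:R.
  have /(congr1 (fun m => m%:R : 'Z_p)) := bT; rewrite [LHS]natrD [RHS]natrD -def_u => e.
  by rewrite -[i%:R](addKr T%:R) -e; ring.
rewrite -setI_eq0; apply/set0Pn; exists (s + i%:R); rewrite inE; apply/andP; split.
  by rewrite /trans; apply: imset_f; apply: imset_f.
by rewrite meet /trans; apply: imset_f; apply: imset2_f.
Qed.

Theorem theorem4p2 :
  (forall k : nat, (0 < k)%N ->
     SEDF (k ^ 2 + 1) 2 k 1
       (pair2 [set (i%:R : 'Z_(k ^ 2 + 1)) | i : 'I_k]
              (trans (k%:R) [set ((i * k)%N%:R : 'Z_(k ^ 2 + 1)) | i : 'I_k])))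
  /\
  (forall v k : nat, (0 < v)%N -> (0 < k)%N -> (k %| v)%N -> (v %| k ^ 2)%N ->
     (1 < k ^ 2 %/ v)%N ->
     forall (s t : 'Z_(v + 1)) (mu : nat),
       ~ SEDF (v + 1) 2 k mu
           (pair2 (trans s [set (i%:R : 'Z_(v + 1)) | i : 'I_k])
                  (trans t [set ((a * k + c)%N%:R : 'Z_(v + 1))
                           | a : 'I_(v %/ k), c : 'I_(k ^ 2 %/ v)]))).
Proof.
split=> [k k_gt0 | v k v_gt0 k_gt0 k_dvd_v _ lam_gt1 s t mu [_ _ _ disj _]].
  exact: SEDF_shifted_multiples.
apply/negP: (disj ord0 ord_max isT); apply: translates_not_disjoint => //.
- by rewrite addn1 ltnS.
- by rewrite divn_gt0 // dvdn_leq.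
- exact: ltnW.
by rewrite divnK // ltn_add2l.
Qed.
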